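(* Let $\mathcal{C}$ be a finite length abelian category and $\mathcal{A}$ the abelian category whose objects are complexes $[A\xrightarrow{}B\xrightarrow{}C]$ in $\mathcal{C}$ (degrees $-2,-1,0$) with first map injective and exact at $B$, morphisms being chain maps modulo homotopy. Let $X=[A\to B\xrightarrow{d}C]$ be an object of $\mathcal{A}$ with $C$ indecomposable in $\mathcal{C}$. Then $X$ is a simple object of $\mathcal{A}$ if and only if $d$ is an almost split right map. Moreover, if $d$ is almost split, then $X$ (denoted $L_C$) is the unique simple quotient of $P_C=[0\to0\to C]$ in $\mathcal{A}$.
   Context: A morphism $d:B\to C$ in $\mathcal{C}$ is an almost split right map if $d$ is not a split surjection and every morphism $\phi:Y\to C$ that is not a split surjection factors through $d$. $\mathcal{A}$ is the heart of the $t$-structure on $K^b(\mathcal{C})$ with $D^{\leq 0}=\{X: X^i=0,\ i>0\}$ and $D^{\geq 0}=\{X: X^i=0,\ i<-2,\ H^{-2}(X)=H^{-1}(X)=0\}$. *)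

From HB Require Import structures.
From mathcomp Require Import all_boot all_order all_algebra.
Set Implicit Arguments. Unset Strict Implicit. Unset Printing Implicit Defensive.
Import GRing.Theory.
Local Open Scope ring_scope.

Record precat := PreCat {
  Obj :> Type;
  Hom : Obj -> Obj -> zmodType;
  idm : forall X, Hom X X;
  comp : forall X Y Z, Hom Y Z -> Hom X Y -> Hom X Z;
  compA : forall X Y Z W (h : Hom Z W) (g : Hom Y Z) (f : Hom X Y),
      comp h (comp g f) = comp (comp h g) f;
  comp1m : forall X Y (f : Hom X Y), comp (idm Y) f = f;
  compm1 : forall X Y (f : Hom X Y), comp f (idm X) = f;
  compDl : forall X Y Z (g1 g2 : Hom Y Z) (f : Hom X Y),
      comp (g1 + g2) f = comp g1 f + comp g2 f;
  compDr : forall X Y Z (g : Hom Y Z) (f1 f2 : Hom X Y),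
      comp g (f1 + f2) = comp g f1 + comp g f2;
  (* a chosen zero object (exists in any abelian category) *)
  zobj : Obj;
  zobjP : idm zobj = 0
}.
Arguments idm {p}.
Arguments comp {p X Y Z}.
Arguments zobj {p}.
Notation "g \oc f" := (comp g f) (at level 40, left associativity).

Section Cat.
Variable C : precat.
Implicit Types X Y Z : C.

Definition is_zero X := idm X = 0 :> Hom X X.
Definition mono X Y (f : Hom X Y) :=
  forall Z (g : Hom Z X), f \oc g = 0 -> g = 0.
Definition epi X Y (f : Hom X Y) :=
  forall Z (g : Hom Y Z), g \oc f = 0 -> g = 0.
Definition iso X Y (f : Hom X Y) :=
  exists g : Hom Y X, g \oc f = idm X /\ f \oc g = idm Y.
Definition is_kernel X Y K (f : Hom X Y) (k : Hom K X) :=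
  f \oc k = 0 /\
  forall Z (g : Hom Z X), f \oc g = 0 -> exists! h : Hom Z K, k \oc h = g.
Definition is_cokernel X Y Q (f : Hom X Y) (c : Hom Y Q) :=
  c \oc f = 0 /\
  forall Z (g : Hom Y Z), g \oc f = 0 -> exists! h : Hom Q Z, h \oc c = g.
Definition is_biproduct X1 X2 P (i1 : Hom X1 P) (i2 : Hom X2 P)
    (p1 : Hom P X1) (p2 : Hom P X2) :=
  [/\ p1 \oc i1 = idm X1, p2 \oc i2 = idm X2, p1 \oc i2 = 0, p2 \oc i1 = 0
    & i1 \oc p1 + i2 \oc p2 = idm P].

Definition abelian : Prop :=
  [/\ (forall X1 X2, exists P (i1 : Hom X1 P) (i2 : Hom X2 P) p1 p2,
          is_biproduct i1 i2 p1 p2),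
      (forall X Y (f : Hom X Y), exists K (k : Hom K X), is_kernel f k),
      (forall X Y (f : Hom X Y), exists Q (c : Hom Y Q), is_cokernel f c),
      (forall X Y (f : Hom X Y), mono f ->
          exists Q (g : Hom Y Q), is_kernel g f)
    & (forall X Y (f : Hom X Y), epi f ->
          exists K (g : Hom K X), is_cokernel g f)].

Definition simple X :=
  ~ is_zero X /\ forall Y (m : Hom Y X), mono m -> is_zero Y \/ iso m.
Definition indecomposable X :=
  ~ is_zero X /\
  forall X1 X2 (i1 : Hom X1 X) (i2 : Hom X2 X) p1 p2,
    is_biproduct i1 i2 p1 p2 -> is_zero X1 \/ is_zero X2.

Definition has_finite_length X :=
  exists (n : nat) (obj : nat -> C) (m : forall i, Hom (obj i) (obj i.+1))
         (e : Hom (obj n) X),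
    [/\ iso e, is_zero (obj 0%N) &
        forall i, (i < n)%N ->
          mono (m i) /\
          exists Q (c : Hom (obj i.+1) Q), is_cokernel (m i) c /\ simple Q].
Definition finite_length := forall X, has_finite_length X.

Definition split_epi X Y (f : Hom X Y) := exists s : Hom Y X, f \oc s = idm Y.
Definition almost_split_right B Y (d : Hom B Y) :=
  ~ split_epi d /\
  forall Z (phi : Hom Z Y), ~ split_epi phi -> exists g : Hom Z B, d \oc g = phi.

End Cat.

Section CatA.
Variable C : precat.

(* a complex [c2 --cf--> c1 --cd--> c0] in degrees -2,-1,0 *)
Record cx := Cx { c2 : C; c1 : C; c0 : C; cf : Hom c2 c1; cd : Hom c1 c0 }.

Definition inA (X : cx) :=
  [/\ cd X \oc cf X = 0, mono (cf X) &
      forall Z (g : Hom Z (c1 X)), cd X \oc g = 0 ->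
        exists h : Hom Z (c2 X), cf X \oc h = g].

Implicit Types X Y Z : cx.
Record tri (X Y : cx) := Tri {
  ma : Hom (c2 X) (c2 Y); mb : Hom (c1 X) (c1 Y); mc : Hom (c0 X) (c0 Y) }.

Definition is_cmap X Y (u : tri X Y) :=
  cf Y \oc ma u = mb u \oc cf X /\ cd Y \oc mb u = mc u \oc cd X.

Definition tcomp X Y Z (v : tri Y Z) (u : tri X Y) : tri X Z :=
  Tri (ma v \oc ma u) (mb v \oc mb u) (mc v \oc mc u).
Definition tid X : tri X X := Tri (idm _) (idm _) (idm _).

Definition htp X Y (u v : tri X Y) :=
  exists (h1 : Hom (c1 X) (c2 Y)) (h0 : Hom (c0 X) (c1 Y)),
    [/\ ma u - ma v = h1 \oc cf X,
        mb u - mb v = cf Y \oc h1 + h0 \oc cd X &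
        mc u - mc v = cd Y \oc h0].
Definition tzero X Y : tri X Y := Tri 0 0 0.

Definition zeroA X := htp (tid X) (tzero X X).
Definition monoA X Y (u : tri X Y) :=
  forall Z, inA Z -> forall v : tri Z X, is_cmap v ->
    htp (tcomp u v) (tzero Z Y) -> htp v (tzero Z X).
Definition epiA X Y (u : tri X Y) :=
  forall Z, inA Z -> forall v : tri Y Z, is_cmap v ->
    htp (tcomp v u) (tzero X Z) -> htp v (tzero Y Z).
Definition isoA X Y (u : tri X Y) :=
  exists v : tri Y X, is_cmap v /\
    htp (tcomp v u) (tid X) /\ htp (tcomp u v) (tid Y).
Definition simpleA X :=
  ~ zeroA X /\
  forall Y, inA Y -> forall u : tri Y X, is_cmap u -> monoA u ->
    zeroA Y \/ isoA u.

Definition PC (Y : C) : cx := Cx (0 : Hom (@zobj C) zobj) (0 : Hom zobj Y).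

End CatA.

(* Write [X = [A -> B -d-> C]].  A subobject of [X] in [A] can be built by
   pulling [d] back along any [phi : Z -> C]; simplicity of [X] says this
   subobject is zero (then [phi] factors through [d]) or all of [X] (then
   [phi a - 1] factors through [d] for some [a]).  As [C] is indecomposable of
   finite length, Fitting's lemma makes [phi a] invertible or nilpotent, so in
   the second case [phi] or [d] is a split epimorphism: [d] is almost split.
   Conversely, if [d] is almost split, a monomorphism [u : Y -> X] in [A] is
   null-homotopic unless its degree-0 component splits, in which case [u] is
   an isomorphism.  The same dichotomy shows that every epimorphism from
   [P_C = [0 -> 0 -> C]] onto a simple object factors through the projection
   [P_C -> X] by an isomorphism. *)

From mathcomp Require Import all_boot all_order all_algebra zify.
From Stdlib Require Import Classical.
Set Implicit Arguments. Unset Strict Implicit. Unset Printing Implicit Defensive.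
Import GRing.Theory.
Local Open Scope ring_scope.

Section Preadditive.
Variable C : precat.
Implicit Types X Y Z W : C.

Lemma comp0l X Y Z (f : Hom X Y) : (0 : Hom Y Z) \oc f = 0.
Proof.
have h := compDl (0 : Hom Y Z) 0 f; rewrite addr0 in h.
by apply: (addrI (0 \oc f)); rewrite -h addr0.
Qed.

Lemma comp0r X Y Z (g : Hom Y Z) : g \oc (0 : Hom X Y) = 0.
Proof.
have h := compDr g (0 : Hom X Y) 0; rewrite addr0 in h.
by apply: (addrI (g \oc 0)); rewrite -h addr0.
Qed.

Lemma compNl X Y Z (g : Hom Y Z) (f : Hom X Y) : (- g) \oc f = - (g \oc f).
Proof. by apply/eqP; rewrite -subr_eq0 opprK -compDl addNr comp0l. Qed.

Lemma compNr X Y Z (g : Hom Y Z) (f : Hom X Y) : g \oc (- f) = - (g \oc f).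
Proof. by apply/eqP; rewrite -subr_eq0 opprK -compDr addNr comp0r. Qed.

Lemma compBl X Y Z (g1 g2 : Hom Y Z) (f : Hom X Y) :
  (g1 - g2) \oc f = g1 \oc f - g2 \oc f.
Proof. by rewrite compDl compNl. Qed.

Lemma compBr X Y Z (g : Hom Y Z) (f1 f2 : Hom X Y) :
  g \oc (f1 - f2) = g \oc f1 - g \oc f2.
Proof. by rewrite compDr compNr. Qed.

Definition compE :=
  (comp0l, comp0r, compNl, compNr, compDl, compDr, comp1m, compm1).

Lemma mono_inj X Y (f : Hom X Y) Z (g1 g2 : Hom Z X) :
  mono f -> f \oc g1 = f \oc g2 -> g1 = g2.
Proof.
move=> mf e; apply/eqP; rewrite -subr_eq0; apply/eqP; apply: mf.
by rewrite compBr e subrr.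
Qed.

Lemma epi_inj X Y (f : Hom X Y) Z (g1 g2 : Hom Y Z) :
  epi f -> g1 \oc f = g2 \oc f -> g1 = g2.
Proof.
move=> ef e; apply/eqP; rewrite -subr_eq0; apply/eqP; apply: ef.
by rewrite compBl e subrr.
Qed.

Lemma mono_comp X Y Z (g : Hom Y Z) (f : Hom X Y) :
  mono g -> mono f -> mono (g \oc f).
Proof. by move=> mg mf W h; rewrite -compA => /mg /mf. Qed.

Lemma epi_comp X Y Z (g : Hom Y Z) (f : Hom X Y) :
  epi g -> epi f -> epi (g \oc f).
Proof. by move=> eg ef W h; rewrite compA => /ef /eg. Qed.

Lemma mono_compr X Y Z (g : Hom Y Z) (f : Hom X Y) : mono (g \oc f) -> mono f.
Proof. by move=> m W h e; apply: m; rewrite -compA e comp0r. Qed.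

Lemma iso_mono X Y (f : Hom X Y) : iso f -> mono f.
Proof. by case=> g [gf _] Z h fh; rewrite -(comp1m h) -gf -compA fh comp0r. Qed.

Lemma iso_epi X Y (f : Hom X Y) : iso f -> epi f.
Proof. by case=> g [_ fg] Z h hf; rewrite -(compm1 h) -fg compA hf comp0l. Qed.

Lemma iso_id X : iso (idm X).
Proof. by exists (idm X); rewrite comp1m. Qed.

Lemma iso_comp X Y Z (g : Hom Y Z) (f : Hom X Y) :
  iso g -> iso f -> iso (g \oc f).
Proof.
case=> g' [g1 g2] [f' [f1 f2]]; exists (f' \oc g'); split.
  by rewrite -compA (compA g') g1 comp1m f1.
by rewrite -compA (compA f) f2 comp1m g2.
Qed.

Lemma zero_from X Y (f : Hom X Y) : is_zero X -> f = 0.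
Proof. by move=> z; rewrite -(compm1 f) z comp0r. Qed.

Lemma zero_to X Y (f : Hom Y X) : is_zero X -> f = 0.
Proof. by move=> z; rewrite -(comp1m f) z comp0l. Qed.

Lemma iso_zero X Y (f : Hom X Y) : iso f -> is_zero Y -> is_zero X.
Proof. by case=> g [gf _] z; rewrite /is_zero -gf (zero_from g z) comp0l. Qed.

Lemma mono_to_zero_iso X Y (m : Hom Y X) : is_zero X -> mono m -> iso m.
Proof.
move=> zX mm; have zY : is_zero Y by apply: mm; apply: zero_to.
by exists 0; rewrite comp0l comp0r zX zY.
Qed.

Lemma ker_mono X Y K (f : Hom X Y) (k : Hom K X) : is_kernel f k -> mono k.
Proof.
case=> fk0 u Z g e.
case: (u Z (k \oc g)); first by rewrite compA fk0 comp0l.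
by move=> h [_ hu]; rewrite -(hu g erefl) (hu 0) // comp0r e.
Qed.

Lemma ker_fact X Y K (f : Hom X Y) (k : Hom K X) Z (g : Hom Z X) :
  is_kernel f k -> f \oc g = 0 -> exists h, k \oc h = g.
Proof. by case=> _ u /u [h [e _]]; exists h. Qed.

Lemma coker_fact X Y Q (f : Hom X Y) (c : Hom Y Q) Z (g : Hom Y Z) :
  is_cokernel f c -> g \oc f = 0 -> exists h, h \oc c = g.
Proof. by case=> _ u /u [h [e _]]; exists h. Qed.

Lemma coker_idm_zobj X : is_cokernel (idm X) (0 : Hom X (@zobj C)).
Proof.
split; first by rewrite comp0l.
move=> Z h; rewrite compm1 => ->; exists 0; split; first by rewrite comp0l.
by move=> h' _; rewrite (zero_from h' (zobjP C)).
Qed.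

End Preadditive.

Section Abelian.
Variable C : precat.
Hypothesis HA : abelian C.
Implicit Types X Y Z W : C.

Lemma kerE X Y (f : Hom X Y) : exists K (k : Hom K X), is_kernel f k.
Proof. by case: HA => _ h _ _ _; apply: h. Qed.

Lemma cokerE X Y (f : Hom X Y) : exists Q (c : Hom Y Q), is_cokernel f c.
Proof. by case: HA => _ _ h _ _; apply: h. Qed.

Lemma biprodE X1 X2 :
  exists P (i1 : Hom X1 P) (i2 : Hom X2 P) p1 p2, is_biproduct i1 i2 p1 p2.
Proof. by case: HA => h _ _ _ _; apply: h. Qed.

Lemma mono_coker_ker X Y Q (m : Hom X Y) (c : Hom Y Q) :
  mono m -> is_cokernel m c -> is_kernel c m.
Proof.
move=> mm cc; case: HA => _ _ _ hm _.
have [Q' [g [gm u]]] := hm _ _ _ mm.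
split=> [|Z h ch]; first by case: cc.
have [g' e] := coker_fact cc gm.
case: (u Z h); first by rewrite -e -compA ch comp0r.
move=> x [xe _]; exists x; split=> // x' e'.
by apply: (mono_inj mm); rewrite xe e'.
Qed.

Lemma epi_ker_coker X Y K (p : Hom X Y) (k : Hom K X) :
  epi p -> is_kernel p k -> is_cokernel k p.
Proof.
move=> ep kk; case: HA => _ _ _ _ he.
have [K' [g [pg u]]] := he _ _ _ ep.
split=> [|Z h hk]; first by case: kk.
have [g' e] := ker_fact kk pg.
case: (u Z h); first by rewrite -e compA hk comp0l.
move=> x [xe _]; exists x; split=> // x' e'.
by apply: (epi_inj ep); rewrite xe e'.
Qed.

Lemma mono_epi_iso X Y (f : Hom X Y) : mono f -> epi f -> iso f.
Proof.
move=> mf ef; case: HA => _ _ _ hm _.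
have [Q [g [gf u]]] := hm _ _ _ mf.
have g0 : g = 0 by apply: ef.
case: (u Y (idm Y)); first by rewrite g0 comp0l.
move=> h [fh _]; exists h; split=> //.
by apply: (mono_inj mf); rewrite compA fh comp1m compm1.
Qed.

Lemma coker_zero_iso X Y Q (m : Hom X Y) (c : Hom Y Q) :
  mono m -> is_cokernel m c -> is_zero Q -> iso m.
Proof.
move=> mm cc zQ; apply: mono_epi_iso => // T g gm.
by have [g' <-] := coker_fact cc gm; rewrite (zero_to c zQ) comp0r.
Qed.

Lemma image_fact X Y (f : Hom X Y) :
  exists I (i : Hom I Y) (q : Hom X I), [/\ mono i, epi q & f = i \oc q].
Proof.
have [Q [c cc]] := cokerE f.
have [I [i ki]] := kerE c.
have [q fq] := ker_fact ki (proj1 cc).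
exists I, i, q; split=> //; first exact: ker_mono ki.
move=> Z g gq.
have [M [m km]] := kerE g.
have [q' qq] := ker_fact km gq.
have mim : mono (i \oc m) by apply: mono_comp; [exact: ker_mono ki|exact: ker_mono km].
case: HA => _ _ _ hm _.
have [H [h [him u]]] := hm _ _ _ mim.
have hf : h \oc f = 0 by rewrite -fq -qq (compA i) compA him comp0l.
have [h' hh] := coker_fact cc hf.
have hi : h \oc i = 0 by rewrite -hh -compA (proj1 ki) comp0r.
have [s [se _]] := u I i hi.
have ms : m \oc s = idm I.
  by apply: (mono_inj (ker_mono ki)); rewrite compA se compm1.
by rewrite -(compm1 g) -ms compA (proj1 km) comp0l.
Qed.

Lemma simple_to_zero_or_epi X Q (f : Hom X Q) : simple Q -> f = 0 \/ epi f.
Proof.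
move=> sQ; have [I [i [q [mi epq ->]]]] := image_fact f.
case: (proj2 sQ I i mi) => [zI|ii]; last by right; apply: epi_comp => //; exact: iso_epi.
by left; rewrite (zero_to q zI) comp0r.
Qed.

(* The pullback is the kernel of [a p1 - b p2] on [X (+) Y], a map that is
   epi as soon as [a] is. *)
Lemma pullbackE X Y Z (a : Hom X Z) (b : Hom Y Z) :
  exists P (pa : Hom P X) (pb : Hom P Y),
    [/\ a \oc pa = b \oc pb,
        (forall W (x : Hom W X) (y : Hom W Y), a \oc x = b \oc y ->
            exists h, pa \oc h = x /\ pb \oc h = y) &
        (epi a -> epi pb)].
Proof.
have [S [i1 [i2 [p1 [p2 [e11 e22 e12 e21 eid]]]]]] := biprodE X Y.
set s := a \oc p1 - b \oc p2.
have [P [k kk]] := kerE s.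
exists P, (p1 \oc k), (p2 \oc k); split.
- apply/eqP; rewrite -subr_eq0 !compA -compBl; apply/eqP; exact: (proj1 kk).
- move=> W x y e.
  have [h he] : exists h, k \oc h = i1 \oc x + i2 \oc y.
    apply: (ker_fact kk).
    rewrite /s !compE !compA -!(compA _ p1) -!(compA _ p2) e11 e12 e21 e22.
    by rewrite !compE addr0 add0r e subrr.
  exists h; rewrite -!compA he !compE !compA e11 e12 e21 e22 !compE.
  by rewrite addr0 add0r.
- move=> ea.
  have si1 : s \oc i1 = a by rewrite /s compBl -!compA e11 e21 !compE subr0.
  have es : epi s by move=> T t ts; apply: ea; rewrite -si1 compA ts comp0l.
  have ck := epi_ker_coker es kk.
  move=> T t tp.
  have [t' te] : exists t', t' \oc s = t \oc p2.
    by apply: (coker_fact ck); rewrite -compA tp.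
  have t'0 : t' = 0 by apply: ea; rewrite -si1 compA te -compA e21 comp0r.
  by rewrite -(compm1 t) -e22 compA -te t'0 !comp0l.
Qed.

End Abelian.

Section Length.
Variable C : precat.
Hypothesis HA : abelian C.
Implicit Types X Y Z W : C.

(* Zero factors are allowed so that the predicate is monotone in [n]. *)
Fixpoint filtration X (n : nat) {struct n} : Prop :=
  match n with
  | 0%N => is_zero X
  | n'.+1 => exists Y (m : Hom Y X), [/\ mono m, filtration Y n' &
        exists Q (c : Hom X Q), is_cokernel m c /\ (simple Q \/ is_zero Q)]
  end.

Lemma filtration_iso n X Y (m : Hom Y X) : iso m -> filtration X n -> filtration Y n.
Proof.
case: n => [|n] /=; first exact: iso_zero.
move=> [g [gm mg]] [Y' [m' [mm' l' [Q [c [cc sQ]]]]]].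
exists Y', (g \oc m'); split=> //.
  by apply: mono_comp => //; apply: iso_mono; exists m.
exists Q, (c \oc m); split=> //; split.
  by rewrite -compA (compA m) mg comp1m (proj1 cc).
move=> Z h hgm.
case: ((proj2 cc) Z (h \oc g)); first by rewrite -compA hgm.
move=> h' [h'e h'u]; exists h'; split.
  by rewrite compA h'e -compA gm compm1.
by move=> h'' e; apply: h'u; rewrite -e -!compA mg compm1.
Qed.

Lemma filtrationS X n : filtration X n -> filtration X n.+1.
Proof.
move=> l; exists X, (idm X); split=> //; first exact: iso_mono (iso_id X).
by exists zobj, 0; split; [exact: coker_idm_zobj | right; exact: zobjP].
Qed.

Lemma filtration_pred X n : filtration X n.-1 -> filtration X n.
Proof. by case: n => //= n; apply: filtrationS. Qed.

Lemma has_finite_length_filtration X :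
  has_finite_length X -> exists n, filtration X n.
Proof.
case=> n [obj [m [e [ie z0 st]]]]; exists n.
have key i : (i <= n)%N -> filtration (obj i) i.
  elim: i => [|i IHi] le //=.
  have [mi [Q [c [cc sQ]]]] := st i le.
  exists (obj i), (m i); split=> //; first by apply: IHi; apply: ltnW.
  by exists Q, c; split=> //; left.
have [ei [ei1 ei2]] := ie.
by apply: (filtration_iso (m := ei)); [exists e | exact: key].
Qed.

(* Intersect [Y] with the last step [Y0] of the filtration of [X]: the simple
   top factor either misses [Y] or is covered by it. *)
Lemma sub_filtration n X : filtration X n -> forall Y (m : Hom Y X), mono m ->
  iso m \/ ((0 < n)%N /\ filtration Y n.-1).
Proof.
elim: n X => [|n IH] X /=; first by move=> zX Y m mm; left; exact: mono_to_zero_iso.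
case=> Y0 [m0 [mm0 l0 [Q [c [cc sQ]]]]] Y m mm.
have kc := mono_coker_ker HA mm0 cc.
case: sQ => [sQ|zQ]; last first.
  have im0 := coker_zero_iso HA mm0 cc zQ.
  have [m0i [e1 e2]] := im0.
  have mz : mono (m0i \oc m) by apply: mono_comp => //; apply: iso_mono; exists m0.
  case: (IH _ l0 _ _ mz) => [iz|[_ lY]]; last by right; split=> //; exact: filtration_pred.
  by left; rewrite -[m]comp1m -e2 -compA; apply: iso_comp.
case: (simple_to_zero_or_epi HA (c \oc m) sQ) => [cm0|ecm].
  have [z mz] := ker_fact kc cm0.
  have mz' : mono z by apply: (mono_compr (g := m0)); rewrite mz.
  right; split=> //.
  case: (IH _ l0 _ _ mz') => [iz|[_ lY]]; last exact: filtration_pred.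
  exact: filtration_iso iz l0.
have [Y' [y ky]] := kerE HA (c \oc m).
have [z mz] : exists z, m0 \oc z = m \oc y.
  by apply: (ker_fact kc); rewrite compA (proj1 ky).
have mz' : mono z.
  by apply: (mono_compr (g := m0)); rewrite mz; apply: mono_comp => //; exact: ker_mono ky.
case: (IH _ l0 _ _ mz') => [[zi [_ zz]]|[n0 lY']].
  left; apply: (mono_epi_iso HA mm) => T g gm.
  have gm0 : g \oc m0 = 0.
    by rewrite -(compm1 m0) -zz (compA m0) mz !compA gm !comp0l.
  have [g' gc] := coker_fact cc gm0.
  have g'0 : g' = 0 by apply: ecm; rewrite compA gc.
  by rewrite -gc g'0 comp0l.
right; split=> //; move: n0 lY'; case: n {IH l0 mz'} => // n _ lY'.
exists Y', y; split=> //; first exact: ker_mono ky.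
by exists Q, (c \oc m); split; [exact: epi_ker_coker | left].
Qed.

Lemma mono_endo_iso X (g : Hom X X) : (exists n, filtration X n) -> mono g -> iso g.
Proof.
case=> n; elim: n {-2}n (leqnn n) => [|k IH] n.
  by rewrite leqn0 => /eqP -> l mg; case: (sub_filtration l mg) => // [[]].
move=> le l mg; case: (sub_filtration l mg) => // [[n0 l']].
by apply: (IH n.-1) => //; case: n le n0 {l l'}.
Qed.

End Length.

Section Fitting.
Variable C : precat.
Hypothesis HA : abelian C.
Hypothesis HFL : finite_length C.
Implicit Types X Y Z W : C.

Fixpoint endopow X (e : Hom X X) (k : nat) : Hom X X :=
  if k is k'.+1 then e \oc endopow e k' else idm X.

Lemma endopowD X (e : Hom X X) a b : endopow e (a + b) = endopow e a \oc endopow e b.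
Proof. by elim: a => [|a IH] /=; rewrite ?comp1m // IH compA. Qed.

Lemma endopow1 X (e : Hom X X) : endopow e 1 = e.
Proof. by rewrite /= compm1. Qed.

Lemma endopowSr X (e : Hom X X) k : endopow e k \oc e = endopow e k.+1.
Proof. by rewrite -addn1 endopowD endopow1. Qed.

Lemma geom_sum_endopow X (e : Hom X X) n :
  (idm X - e) \oc \sum_(k < n) endopow e k = idm X - endopow e n.
Proof.
elim: n => [|n IH]; first by rewrite big_ord0 comp0r subrr.
by rewrite big_ord_recr compDr IH compBl comp1m /= addrA subrK.
Qed.

Definition kernel_stable X (e : Hom X X) N :=
  forall W (x : Hom W X), endopow e N.+1 \oc x = 0 -> endopow e N \oc x = 0.

(* The kernels of the powers of [e] form an ascending chain of subobjects of
   [X]; as long as it grows strictly, its length is bounded by that of [X]. *)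
Lemma kernel_stabilizes X (e : Hom X X) : exists N, kernel_stable e N.
Proof.
apply: NNPP => nst.
have grow M j K (k : Hom K X) : is_kernel (endopow e M) k -> filtration K j ->
    (M <= j)%N.
  elim: M j K k => [//|M IH] j K k kk l.
  have [K' [k' kk']] := kerE HA (endopow e M).
  have [a ae] : exists a, k \oc a = k'.
    by apply: (ker_fact kk); rewrite /= -compA (proj1 kk') comp0r.
  have ma : mono a by apply: (mono_compr (g := k)); rewrite ae; exact: ker_mono kk'.
  case: (sub_filtration HA l ma) => [[ai [_ ai2]]|[j0 l']].
    exfalso; apply: nst; exists M => W x ex.
    have [h <-] := ker_fact kk ex.
    by rewrite -(compm1 k) -ai2 (compA k a) ae !compA (proj1 kk') !comp0l.
  by have := IH _ _ _ kk' l'; lia.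
have [n ln] := has_finite_length_filtration (HFL X).
have [K [k kk]] := kerE HA (endopow e n.+1).
case: (sub_filtration HA ln (ker_mono kk)) => [ik|[n0 l']].
  by have := grow _ _ _ _ kk (filtration_iso ik ln); rewrite ltnn.
by have := grow _ _ _ _ kk l'; lia.
Qed.

Lemma kernel_stable_add X (e : Hom X X) N : kernel_stable e N ->
  forall j W (x : Hom W X), endopow e (N + j) \oc x = 0 -> endopow e N \oc x = 0.
Proof.
move=> s; elim=> [|j IH] W x; first by rewrite addn0.
by rewrite addnS -endopowSr -compA => /IH; rewrite compA endopowSr; apply: s.
Qed.

Lemma indecomposable_idem X (p : Hom X X) :
  indecomposable X -> p \oc p = p -> p = 0 \/ p = idm X.
Proof.
move=> [_ ind] pp.
have [K1 [k1 kk1]] := kerE HA (idm X - p).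
have [K2 [k2 kk2]] := kerE HA p.
have [p1 e1] : exists p1, k1 \oc p1 = p.
  by apply: (ker_fact kk1); rewrite compBl comp1m pp subrr.
have [p2 e2] : exists p2, k2 \oc p2 = idm X - p.
  by apply: (ker_fact kk2); rewrite compBr compm1 pp subrr.
have pk1 : p \oc k1 = k1.
  by have /eqP := proj1 kk1; rewrite compBl comp1m subr_eq0 => /eqP <-.
have pk2 : p \oc k2 = 0 := proj1 kk2.
have mk1 := ker_mono kk1; have mk2 := ker_mono kk2.
have bp : is_biproduct k1 k2 p1 p2.
  split.
  - by apply: (mono_inj mk1); rewrite compA e1 pk1 compm1.
  - by apply: (mono_inj mk2); rewrite compA e2 compBl pk2 subr0 comp1m compm1.
  - by apply: (mono_inj mk1); rewrite compA e1 pk2 comp0r.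
  - by apply: (mono_inj mk2); rewrite compA e2 compBl pk1 comp1m subrr comp0r.
  - by rewrite e1 e2 addrC subrK.
case: (ind _ _ _ _ _ _ bp) => z.
  by left; rewrite -e1 (zero_to p1 z) comp0r.
by right; apply/eqP; rewrite eq_sym -subr_eq0 -e2 (zero_to p2 z) comp0r.
Qed.

(* Past the stabilisation index, [f := e^(N+1)] is injective on its image
   [I]; so [q i] is a monic, hence invertible, endomorphism of [I], and
   [i (q i)^-1 q] is an idempotent of [X], which is [0] (then [f = 0]) or the
   identity (then [f] is monic). *)
Lemma fitting_lemma X (e : Hom X X) :
  indecomposable X -> iso e \/ exists N, endopow e N = 0.
Proof.
move=> ind.
have [N sN] := kernel_stabilizes e.
set f := endopow e N.+1.
have ff W (x : Hom W X) : f \oc (f \oc x) = 0 -> f \oc x = 0.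
  rewrite compA /f -endopowD (_ : (N.+1 + N.+1 = N + N.+2)%N); last by lia.
  by move=> /(kernel_stable_add sN); rewrite /= -compA => ->; rewrite comp0r.
have [I [i [q [mi epq fe]]]] := image_fact HA f.
have mqi : mono (q \oc i).
  move=> W x qix.
  have [P [pa [pb [pe _ pep]]]] := pullbackE HA q x.
  apply: (pep epq); apply: (mono_inj mi); rewrite comp0r.
  have : f \oc pa = 0.
    apply: ff; rewrite fe -!compA pe (compA i x pb) (compA q (i \oc x) pb).
    by rewrite (compA q i x) qix comp0l !comp0r.
  by rewrite fe -compA pe.
have [t [tqi qit]] := mono_endo_iso HA (has_finite_length_filtration (HFL I)) mqi.
have pp : (i \oc t \oc q) \oc (i \oc t \oc q) = i \oc t \oc q.
  by rewrite -!compA (compA q i) (compA (q \oc i) t) qit comp1m.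
case: (indecomposable_idem ind pp) => p0.
  right; exists N.+1; rewrite -/f fe.
  have tq : t \oc q = 0 by apply: (mono_inj mi); rewrite compA p0 comp0r.
  have zI : is_zero I by rewrite /is_zero -qit (epq _ _ tq) comp0r.
  by rewrite (zero_to q zI) comp0r.
left; apply: (mono_endo_iso HA); first exact: has_finite_length_filtration (HFL X).
have mf : mono f.
  move=> W x fx; rewrite -(comp1m x) -p0 -compA.
  have : i \oc (q \oc x) = 0 by rewrite compA -fe.
  by move/mi ->; rewrite comp0r.
by apply: (mono_compr (g := endopow e N)); rewrite endopowSr.
Qed.

End Fitting.

Section Complexes.
Variable C : precat.
Implicit Types X Y Z : cx C.

Definition tsub X Y (u v : tri X Y) : tri X Y :=
  Tri (ma u - ma v) (mb u - mb v) (mc u - mc v).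

Lemma tcomp_tidr X Y (u : tri X Y) : tcomp u (tid X) = u.
Proof. by case: u => a b c; rewrite /tcomp /tid /= !compm1. Qed.

Lemma tcomp_tidl X Y (u : tri X Y) : tcomp (tid Y) u = u.
Proof. by case: u => a b c; rewrite /tcomp /tid /= !comp1m. Qed.

Lemma cmap_tid X : is_cmap (tid X).
Proof. by rewrite /is_cmap /tid /= !comp1m !compm1. Qed.

Lemma cmap_tcomp X Y Z (v : tri Y Z) (u : tri X Y) :
  is_cmap u -> is_cmap v -> is_cmap (tcomp v u).
Proof.
case=> u1 u2 [v1 v2]; rewrite /is_cmap /tcomp /=.
by rewrite !compA v1 v2 -!compA u1 u2.
Qed.

Lemma cmap_tsub X Y (u v : tri X Y) :
  is_cmap u -> is_cmap v -> is_cmap (tsub u v).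
Proof.
by case=> u1 u2 [v1 v2]; rewrite /is_cmap /tsub /= !compBl !compBr u1 u2 v1 v2.
Qed.

Lemma htp_tsub X Y (u v : tri X Y) : htp (tsub u v) (tzero X Y) -> htp u v.
Proof. by case=> h1 [h0]; rewrite /tsub /tzero /= !subr0; exists h1, h0. Qed.

Lemma eq_htp X Y (u v : tri X Y) :
  ma u = ma v -> mb u = mb v -> mc u = mc v -> htp u v.
Proof.
move=> ea eb ec; exists 0, 0; rewrite ea eb ec !subrr.
by split; rewrite ?comp0l ?comp0r ?addr0.
Qed.

(* Exactness at [c1 Y] builds the degree -1 part of the homotopy from [g];
   the degree -2 part is then forced since [cf Y] is monic. *)
Lemma htp0_factor X Y (u : tri X Y) : cd X \oc cf X = 0 -> inA Y ->
  is_cmap u -> forall g, mc u = cd Y \oc g -> htp u (tzero X Y).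
Proof.
move=> dfX [dfY mfY exY] [u1 u2] g ug.
have [h he] : exists h, cf Y \oc h = mb u - g \oc cd X.
  by apply: exY; rewrite compBr u2 ug compA subrr.
exists h, g; rewrite /tzero /= !subr0; split=> //; last by rewrite he subrK.
by apply: (mono_inj mfY); rewrite u1 compA he compBl -compA dfX comp0r subr0.
Qed.

Lemma inA_PC (Y : C) : inA (PC Y).
Proof.
split=> [|Z g _|Z g _] /=; first by rewrite comp0r.
  exact: zero_to (zobjP C).
by exists 0; rewrite comp0r; symmetry; apply: zero_to (zobjP C).
Qed.

Lemma zeroA_split_epi X : inA X -> zeroA X <-> split_epi (cd X).
Proof.
move=> hX; split=> [[h1 [h0 [_ _ e3]]]|[s ds]].
  by exists h0; rewrite -e3 /tid /tzero /= subr0.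
by case: (hX) => dfX _ _; apply: (htp0_factor dfX hX (cmap_tid X) (g := s)); rewrite ds.
Qed.

End Complexes.

Section SimpleObjects.
Variable C : precat.
Implicit Types X Y Z : cx C.

Lemma simpleA_factor_dichotomy (HA : abelian C) Y (Z : C) (phi : Hom Z (c0 Y)) :
  inA Y -> simpleA Y ->
  (exists g, cd Y \oc g = phi) \/
  (exists a h, phi \oc a - idm (c0 Y) = cd Y \oc h).
Proof.
move=> [dY mY exY] sY.
have [P [pa [pb [pe pu _]]]] := pullbackE HA (cd Y) phi.
have [K [k kk]] := kerE HA pb.
have [ua uae] : exists ua, cf Y \oc ua = pa \oc k.
  by apply: exY; rewrite compA pe -compA (proj1 kk) comp0r.
pose Y' := @Cx C K P Z k pb.
have hY' : inA Y'.
  split; [exact: (proj1 kk) | exact: ker_mono kk |].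
  by move=> W g pg; exact: ker_fact kk pg.
pose u := @Tri C Y' Y ua pa phi.
have cu : is_cmap u by split.
have mu : monoA u.
  move=> Z' hZ' v cv [h1 [h0 [_ _ +]]]; rewrite /tcomp /tzero /= subr0 => e3.
  have [s [_ s2]] := pu _ h0 (mc v) (esym e3).
  by case: (hZ') => dZ' _ _; apply: (htp0_factor dZ' hY' cv (g := s)); rewrite s2.
case: (proj2 sY Y' hY' u cu mu) => [[h1 [h0 [_ _]]]|[w [_ [_ [h1 [h0 [_ _ e3]]]]]]].
  rewrite /tid /tzero /= subr0 => e3; left; exists (pa \oc h0).
  by rewrite compA pe -compA -e3 compm1.
by right; exists (mc w), h0.
Qed.

Lemma monoA_split_epi_isoA X Y (u : tri Y X) : inA X -> inA Y ->
  is_cmap u -> monoA u -> split_epi (mc u) -> isoA u.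
Proof.
move=> hX hY cu mu [s us]; have [dX _ _] := hX; have [dY _ exY] := hY.
pose v0 := @Tri C (PC (c1 X)) Y 0 0 (s \oc cd X).
have cv0 : is_cmap v0 by rewrite /is_cmap /= !comp0r.
have hv0 : htp (tcomp u v0) (tzero _ _).
  exists 0, (idm (c1 X)); rewrite /tcomp /tzero /=.
  by rewrite !comp0r !subr0 ?addr0 compA us comp1m compm1.
have [h1 [h0 [_ _]]] := mu _ (inA_PC (c1 X)) v0 cv0 hv0.
rewrite /tzero /= subr0 => e3.
have [wa wae] : exists wa, cf Y \oc wa = h0 \oc cf X.
  by apply: exY; rewrite compA -e3 -compA dX comp0r.
pose w := @Tri C X Y wa h0 s.
have cw : is_cmap w by split.
exists w; split=> //; split; apply: htp_tsub.
  have cv : is_cmap (tsub (tcomp w u) (tid Y)).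
    by apply: cmap_tsub; [exact: cmap_tcomp | exact: cmap_tid].
  apply: (mu _ hY _ cv); apply: (htp0_factor dY hX (cmap_tcomp cv cu) (g := 0)).
  by rewrite /tcomp /tid /= compBr compm1 compA us comp1m subrr comp0r.
apply: (htp0_factor dX hX (cmap_tsub (cmap_tcomp cw cu) (cmap_tid X)) (g := 0)).
by rewrite /tcomp /tid /= us subrr comp0r.
Qed.

Lemma almost_split_htp0 X Z (v : tri Z X) : inA X -> almost_split_right (cd X) ->
  cd Z \oc cf Z = 0 -> is_cmap v -> ~ split_epi (mc v) -> htp v (tzero Z X).
Proof.
move=> hX [_ ash] dZ cv /ash [g gv].
by apply: (htp0_factor dZ hX cv (g := g)); rewrite gv.
Qed.

Lemma almost_split_simpleA X : inA X -> almost_split_right (cd X) -> simpleA X.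
Proof.
move=> hX asX; split=> [/(zeroA_split_epi hX)|Y hY u cu mu]; first by case: asX.
case: (classic (split_epi (mc u))) => [su|nsu].
  by right; apply: monoA_split_epi_isoA.
left; apply: (mu _ hY (tid Y) (cmap_tid Y)); rewrite tcomp_tidr.
by case: (hY) => dY _ _; apply: almost_split_htp0.
Qed.

Lemma simpleA_almost_split (HA : abelian C) (HFL : finite_length C) X :
  inA X -> indecomposable (c0 X) -> simpleA X -> almost_split_right (cd X).
Proof.
move=> hX ind sX.
have nsd : ~ split_epi (cd X) by move/(zeroA_split_epi hX); case: sX.
split=> // Z phi nsp.
case: (simpleA_factor_dichotomy HA phi hX sX) => // [[a [h e]]]; exfalso.
case: (fitting_lemma HA HFL (phi \oc a) ind) => [[ei [_ e2]]|[N eN]].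
  by apply: nsp; exists (a \oc ei); rewrite compA.
apply: nsd; exists ((- h) \oc \sum_(k < N) endopow (phi \oc a) k).
by rewrite compA compNr -e opprB geom_sum_endopow eN subr0.
Qed.

Lemma epiA_PC_nonfactor (c : C) Y (q : tri (PC c) Y) g : inA Y -> simpleA Y ->
  is_cmap q -> epiA q -> mc q <> cd Y \oc g.
Proof.
move=> hY sY cq eq_q e; apply: (proj1 sY).
apply: (eq_q _ hY (tid Y) (cmap_tid Y)); rewrite tcomp_tidl.
by apply: (htp0_factor _ hY cq e); rewrite /PC /= comp0r.
Qed.

(* If [mc q \oc cd X] split modulo [cd Y], i.e. [(mc q \oc cd X) a - 1 = cd Y h],
   then either [1 - cd X a mc q] splits and [mc q] would factor through
   [cd Y], or it factors through [cd X] and [cd X] would split. *)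
Lemma simple_quotient_PC_factor (HA : abelian C) X Y (q : tri (PC (c0 X)) Y) :
  inA X -> almost_split_right (cd X) -> inA Y -> simpleA Y ->
  is_cmap q -> epiA q -> exists g, cd Y \oc g = mc q \oc cd X.
Proof.
move=> hX [nsd ash] hY sY cq eq_q.
case: (simpleA_factor_dichotomy HA (mc q \oc cd X) hY sY) => // [[a [h e]]].
exfalso; pose t := idm (c0 X) - cd X \oc (a \oc mc q).
case: (classic (split_epi t)) => [[s ts]|/ash [b be]].
  apply: (epiA_PC_nonfactor (g := (- (h \oc mc q)) \oc s) hY sY cq eq_q).
  have e2 : mc q \oc t = cd Y \oc (- (h \oc mc q)).
    move/(congr1 (fun z => z \oc mc q)): e; rewrite /= compBl comp1m ?compA => e.
    by rewrite /t compBr compm1 compNr !compA -e opprB.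
  by rewrite -{1}(compm1 (mc q)) -ts compA e2 compA.
by apply: nsd; exists (a \oc mc q + b); rewrite compDr be /t addrC subrK.
Qed.

Lemma PC_simple_quotient (HA : abelian C) X : inA X -> almost_split_right (cd X) ->
  exists p : tri (PC (c0 X)) X,
    [/\ is_cmap p, epiA p &
        forall Y : cx C, inA Y -> simpleA Y ->
          forall q : tri (PC (c0 X)) Y, is_cmap q -> epiA q ->
            exists theta : tri X Y,
              [/\ is_cmap theta, isoA theta & htp (tcomp theta p) q]].
Proof.
move=> hX asX; have [dX _ _] := hX; have [nsd _] := asX.
pose p := @Tri C (PC (c0 X)) X 0 0 (idm (c0 X)).
have cp : is_cmap p by rewrite /is_cmap /= !comp0r.
exists p; split=> //.
  move=> Z hZ v cv [h1 [h0 [_ _ +]]]; rewrite /tcomp /tzero /= compm1 subr0 => e3.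
  exact: (htp0_factor dX hZ cv e3).
move=> Y hY sY q cq eq_q; have [dY _ exY] := hY.
have [g ge] := simple_quotient_PC_factor HA hX asX hY sY cq eq_q.
have [ta tae] : exists ta, cf Y \oc ta = g \oc cf X.
  by apply: exY; rewrite compA ge -compA dX comp0r.
pose th := @Tri C X Y ta g (mc q).
have cth : is_cmap th by split.
have mth : monoA th.
  move=> Z hZ v cv [h1 [h0 [_ _ +]]]; rewrite /tcomp /tzero /= subr0 => e3.
  have [dZ _ _] := hZ; apply: almost_split_htp0 => // - [s vs].
  apply: (epiA_PC_nonfactor (g := h0 \oc s) hY sY cq eq_q).
  by rewrite -{1}(compm1 (mc q)) -vs compA e3 compA.
exists th; split=> //.
  case: (proj2 sY X hX th cth mth) => // /(zeroA_split_epi hX).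
  by move/nsd.
by apply: eq_htp; rewrite /tcomp /= ?comp0r ?compm1 //; symmetry; apply: zero_from (zobjP C).
Qed.

End SimpleObjects.

Theorem proposition4p1 (C : precat) (HA : abelian C) (HFL : finite_length C)
    (X : cx C) (HX : inA X) (Hind : indecomposable (c0 X)) :
  (simpleA X <-> almost_split_right (cd X)) /\
  (almost_split_right (cd X) ->
     exists p : tri (PC (c0 X)) X,
       [/\ is_cmap p, epiA p &
           forall Y : cx C, inA Y -> simpleA Y ->
             forall q : tri (PC (c0 X)) Y, is_cmap q -> epiA q ->
               exists theta : tri X Y,
                 [/\ is_cmap theta, isoA theta & htp (tcomp theta p) q]]).
Proof.
split; first split.
- exact: simpleA_almost_split.
- exact: almost_split_simpleA.
- exact: PC_simple_quotient.
Qed.
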